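(* Let $\mathcal F$ be a family of nonempty subsets of $[r]$ with $[r]\in\mathcal F$. Then $\Delta_{\mathcal F}$ has dimension $r-1$, and its facets are in bijection with $\widehat{\mathcal F}\setminus\{[r]\}$: for each $G\in\widehat{\mathcal F}$ with $G\ne[r]$, the set of points of $\Delta_{\mathcal F}$ where $\sum_{i\in G}x_i=|\{F\in\mathcal F:F\subseteq G\}|$ is a facet, distinct $G$ give distinct facets, and every facet arises this way. In particular the inequality description of Proposition 3.12 restricted to $G\in\widehat{\mathcal F}$ is irredundant.
   Context: For $F\subseteq[r]$ nonempty, $\Delta_F=\operatorname{conv}\{e_i:i\in F\}\subseteq\mathbb R^r$, and $\Delta_{\mathcal F}=\sum_{F\in\mathcal F}\Delta_F$ (Minkowski sum). Proposition 3.12 states that $\Delta_{\mathcal F}=\{x\in\mathbb R^r_{\ge0}:\sum_i x_i=|\mathcal F|,\ \sum_{i\in G}x_i\ge|\{F\in\mathcal F:F\subseteq G\}|\ \forall G\in\widehat{\mathcal F}\}$. The building closure $\widehat{\mathcal F}$ is the smallest family of subsets of $[r]$ containing $\mathcal F$ and all singletons such that $F\cup F'\in\widehat{\mathcal F}$ whenever $F,F'\in\widehat{\mathcal F}$ and $F\cap F'\ne\emptyset$. *)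

From HB Require Import structures.
From mathcomp Require Import all_boot all_order all_algebra.
Set Implicit Arguments. Unset Strict Implicit. Unset Printing Implicit Defensive.
Import Order.TTheory GRing.Theory Num.Theory.
Local Open Scope ring_scope.

Section Defs.
Variables (R : realFieldType) (r : nat).
Notation pt := 'rV[R]_r.

Definition ptset := pt -> Prop.

Definition seteqP (S T : ptset) : Prop := forall x, S x <-> T x.

Definition evec (i : 'I_r) : pt := delta_mx 0 i.

Definition simplexF (F : {set 'I_r}) : ptset := fun x =>
  exists lam : 'I_r -> R, (forall i, 0 <= lam i) /\
    \sum_(i in F) lam i = 1 /\ x = \sum_(i in F) lam i *: evec i.

Definition DeltaFam (Fam : {set {set 'I_r}}) : ptset := fun x =>
  exists y : {set 'I_r} -> pt, (forall F, F \in Fam -> simplexF F (y F)) /\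
    x = \sum_(F in Fam) y F.

Definition building_closed (H : {set {set 'I_r}}) : Prop :=
  forall G G', G \in H -> G' \in H -> G :&: G' != set0 -> G :|: G' \in H.

Definition bclosure (Fam : {set {set 'I_r}}) : {set {set 'I_r}} :=
  [set G | [forall H : {set {set 'I_r}},
     [&& Fam \subset H, [forall i : 'I_r, [set i] \in H] &
        [forall G1 in H, forall G2 in H,
           (G1 :&: G2 != set0) ==> (G1 :|: G2 \in H)]] ==> (G \in H)]].

(* affine dimension: P has dimension d iff P contains d+1 affinely independent
   points and no d+2 affinely independent points (empty P has no nat dimension) *)
Definition aff_indep_in (P : ptset) (p0 : pt) (ps : seq pt) : Prop :=
  P p0 /\ (forall q, q \in ps -> P q) /\ free [seq q - p0 | q <- ps].

Definition has_dim (P : ptset) (d : nat) : Prop :=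
  (exists p0 ps, aff_indep_in P p0 ps /\ size ps = d) /\
  (forall p0 ps, aff_indep_in P p0 ps -> (size ps <= d)%N).

Definition dotp (a x : pt) : R := \sum_(i < r) a 0 i * x 0 i.

Definition face (P S : ptset) : Prop :=
  exists (a : pt) (b : R), (forall x, P x -> dotp a x <= b) /\
    seteqP S (fun x => P x /\ dotp a x = b).

Definition facet (P S : ptset) : Prop :=
  face P S /\ exists d : nat, has_dim P d.+1 /\ has_dim S d.

Definition nFsub (Fam : {set {set 'I_r}}) (G : {set 'I_r}) : R :=
  #|[set F in Fam | F \subset G]|%:R.

Definition Gface (Fam : {set {set 'I_r}}) (G : {set 'I_r}) : ptset := fun x =>
  DeltaFam Fam x /\ \sum_(i in G) x 0 i = nFsub Fam G.

(* The nonnegativity constraints x_i >= 0 are not listed separately: they are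
   the singleton inequalities G = {i} (singletons lie in the building closure,
   and #{F in Fam | F \subset {i}} >= 0). *)
Definition Hsys (Fam : {set {set 'I_r}}) (T : {set {set 'I_r}}) : ptset :=
  fun x => \sum_(i < r) x 0 i = #|Fam|%:R /\
    forall G, G \in T -> nFsub Fam G <= \sum_(i in G) x 0 i.

End Defs.

From mathcomp Require Import all_boot all_order all_algebra.
From mathcomp Require Import zify lra.
Import Order.TTheory GRing.Theory Num.Theory.
Local Open Scope ring_scope.
Set Implicit Arguments. Unset Strict Implicit. Unset Printing Implicit Defensive.

(* On the face [sum_(i in G) x_i = #{F in Fam | F \subset G}], the summand
   Delta_F of a point puts all its mass inside G when F lies in G and all of it
   outside G otherwise.  Changing the vertex chosen in one summand thus moves
   along some e_j - e_k with j and k on the same side of G; connectedness of G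
   (which characterizes the building closure) and the summand Delta_[r] yield
   all such directions, so the face has dimension r - 2 = dim Delta_Fam - 1.
   Conversely, where a linear form a is maximal, each summand lives on the
   maximizers of a on F, so sums of x over sets containing all or none of these
   maximizers are constant there; on a facet at most two such blocks fit, which
   forces a to be two-valued with a connected lower level set G.  Distinct G are
   separated by a vertex lying on one face only, and moving mass 1/r from G0 to
   its complement violates the G0 inequality alone. *)

Section Coordinates.
Variables (R : realFieldType) (r : nat).
Implicit Types (a x y : 'rV[R]_r) (G B : {set 'I_r}).

Definition ssum x G : R := \sum_(i in G) x 0 i.

Lemma evecE (i j : 'I_r) : evec R i 0 j = (i == j)%:R.
Proof. by rewrite /evec mxE eq_sym. Qed.

Lemma ssumD x y G : ssum (x + y) G = ssum x G + ssum y G.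
Proof. by rewrite /ssum -big_split; apply: eq_bigr => i _; rewrite mxE. Qed.

Lemma ssumB x y G : ssum (x - y) G = ssum x G - ssum y G.
Proof. by rewrite /ssum -sumrB; apply: eq_bigr => i _; rewrite !mxE. Qed.

Lemma ssumZ c x G : ssum (c *: x) G = c * ssum x G.
Proof. by rewrite /ssum mulr_sumr; apply: eq_bigr => i _; rewrite mxE. Qed.

Lemma ssum_sum (I : finType) (P : pred I) (y : I -> 'rV[R]_r) G :
  ssum (\sum_(F | P F) y F) G = \sum_(F | P F) ssum (y F) G.
Proof. by rewrite /ssum; under eq_bigr do rewrite summxE; exact: exchange_big. Qed.

Lemma ssum_evec j G : ssum (evec R j) G = (j \in G)%:R.
Proof.
rewrite /ssum big_mkcond (bigD1 j) //= evecE eqxx big1 ?addr0 => [|i ij].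
  by case: (j \in G).
by rewrite evecE eq_sym (negbTE ij); case: (i \in G).
Qed.

Lemma ssumT x : ssum x [set: 'I_r] = \sum_(i < r) x 0 i.
Proof. by apply: eq_bigl => i; rewrite inE. Qed.

Lemma ssumC x G : ssum x (~: G) = ssum x [set: 'I_r] - ssum x G.
Proof. by rewrite /ssum [in RHS](big_setID G) setTI setTD addrC addKr. Qed.

Lemma ssumU x B1 B2 :
  [disjoint B1 & B2] -> ssum x (B1 :|: B2) = ssum x B1 + ssum x B2.
Proof. by move=> dB; rewrite /ssum -bigU //; apply: eq_bigl => i; rewrite !inE. Qed.

Lemma ssum_supp y G B :
  (forall i, i \notin B -> y 0 i = 0) -> ssum y G = ssum y (G :&: B).
Proof.
move=> yB; rewrite /ssum (big_setID B) /= addrC big1 ?add0r // => i.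
by rewrite inE => /andP[/yB].
Qed.

Lemma dotpD a x y : dotp a (x + y) = dotp a x + dotp a y.
Proof. by rewrite /dotp -big_split; apply: eq_bigr => i _; rewrite mxE mulrDr. Qed.

Lemma dotp_evec a j : dotp a (evec R j) = a 0 j.
Proof.
rewrite /dotp (bigD1 j) //= evecE eqxx mulr1 big1 ?addr0 // => i ij.
by rewrite evecE eq_sym (negbTE ij) mulr0.
Qed.

Lemma dotp_two_levels a x G (t m : R) :
  (forall i, i \in G -> a 0 i = t) -> (forall i, i \notin G -> a 0 i = m) ->
  dotp a x = m * ssum x [set: 'I_r] - (m - t) * ssum x G.
Proof.
move=> aG aGc; rewrite ssumT /ssum !mulr_sumr [X in _ - X]big_mkcond /= -sumrB.
apply: eq_bigr => i _; case: (boolP (i \in G)) => iG.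
  by rewrite aG // mulrBl opprB addrC subrK.
by rewrite aGc // subr0.
Qed.

End Coordinates.

Section Simplex.
Variables (R : realFieldType) (r : nat).
Implicit Types (a y : 'rV[R]_r) (F G S : {set 'I_r}).

Definition amax a F : {set 'I_r} := [set i in F | [forall j in F, a 0 j <= a 0 i]].

Lemma amax_sub a F : amax a F \subset F.
Proof. by apply/subsetP => i /setIdP[]. Qed.

Lemma amax_subset a F G k :
  F \subset G -> k \in F -> k \in amax a G -> amax a F \subset amax a G.
Proof.
move=> FG kF /setIdP[kG /forall_inP kmax]; apply/subsetP => i /setIdP[iF /forall_inP imax].
rewrite inE (subsetP FG) //=; apply/forall_inP => j jG.
exact: le_trans (kmax j jG) (imax k kF).
Qed.

Lemma amax_neq0 a G : G != set0 -> amax a G != set0.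
Proof.
case/set0Pn=> i iG; have [k kG kmax] : exists2 k, k \in G & forall j, j \in G -> a 0 j <= a 0 k.
  by case: (arg_maxP (fun j => a 0 j) iG) => k; exists k.
by apply/set0Pn; exists k; rewrite inE kG; apply/forall_inP.
Qed.

Lemma amax_eq a G i j : i \in amax a G -> j \in amax a G -> a 0 i = a 0 j.
Proof.
move=> /setIdP[iG /forall_inP imax] /setIdP[jG /forall_inP jmax].
by apply/le_anti; rewrite imax ?jmax.
Qed.

Lemma amax_compatible_in a F G :
  F \subset G -> (amax a F \subset amax a G) || [disjoint amax a F & amax a G].
Proof.
move=> FG; case: (boolP [disjoint F & amax a G]) => dFA.
  by rewrite (disjointWl (amax_sub a F)) ?orbT.
have /set0Pn[k /setIP[kF kA]] : F :&: amax a G != set0 by rewrite setI_eq0.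
by rewrite (amax_subset FG kF kA).
Qed.

Lemma sum_evecE F (lam : 'I_r -> R) j :
  (\sum_(i in F) lam i *: evec R i) 0 j = (j \in F)%:R * lam j.
Proof.
rewrite summxE big_mkcond (bigD1 j) //= mxE evecE eqxx mulr1 big1 ?addr0.
  by case: (j \in F); rewrite ?mul1r ?mul0r.
by move=> i ij; rewrite mxE evecE (negbTE ij) mulr0; case: (i \in F).
Qed.

Lemma simplexFP F y :
  simplexF F y <-> [/\ forall j, 0 <= y 0 j, forall j, j \notin F -> y 0 j = 0
                    & ssum y F = 1].
Proof.
split=> [[lam [lam_ge0 [lam1 ->]]]|[y_ge0 yF y1]].
  split=> [j|j jF|]; rewrite ?sum_evecE ?mulr_ge0 ?ler0n ?(negbTE jF) ?mul0r //.
  by rewrite -lam1; apply: eq_bigr => j jF; rewrite sum_evecE jF mul1r.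
exists (fun i => y 0 i); split=> //; split=> //; apply/rowP => j; rewrite sum_evecE.
by case: (boolP (j \in F)) => jF; rewrite ?mul1r // mul0r yF.
Qed.

Lemma simplex_evec F j : j \in F -> simplexF F (evec R j).
Proof.
move=> jF; apply/simplexFP; split=> [i|i iF|]; rewrite ?ssum_evec ?jF //.
  by rewrite evecE ler0n.
by rewrite evecE; case: eqP => // eij; rewrite -eij jF in iF.
Qed.

Lemma simplex_ssum_ge0 F G y : simplexF F y -> 0 <= ssum y G.
Proof. by case/simplexFP => y_ge0 _ _; apply: sumr_ge0. Qed.

Lemma simplex_ssum1 F G y : simplexF F y -> F \subset G -> ssum y G = 1.
Proof. by case/simplexFP => _ yF y1 FG; rewrite (ssum_supp _ yF) (setIidPr FG). Qed.

Lemma simplex_ssum_ge F G y : simplexF F y -> (F \subset G)%:R <= ssum y G.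
Proof.
move=> yF; case: (boolP (F \subset G)) => FG; first by rewrite (simplex_ssum1 yF FG).
exact: simplex_ssum_ge0 yF.
Qed.

Lemma simplex_coord_le F G y k : simplexF F y -> k \in G -> y 0 k <= ssum y G.
Proof.
by case/simplexFP => y_ge0 _ _ kG; rewrite /ssum (bigD1 k) //= lerDl sumr_ge0.
Qed.

Definition unif S : 'rV[R]_r := \sum_(i in S) (#|S|%:R)^-1 *: evec R i.

Lemma simplex_unif S : S != set0 -> simplexF S (unif S).
Proof.
move=> S0; apply/simplexFP; split=> [j|j jS|]; rewrite /unif ?sum_evecE.
- by rewrite mulr_ge0 ?invr_ge0 ?ler0n.
- by rewrite (negbTE jS) mul0r.
rewrite /ssum (eq_bigr (fun=> (#|S|%:R)^-1)) => [|j jS]; last first.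
  by rewrite sum_evecE jS mul1r.
by rewrite sumr_const -[_ *+ #|S|]mulr_natr mulVf // pnatr_eq0 cards_eq0.
Qed.

Lemma unif_ssum_ge S G k : k \in S -> k \in G -> (r%:R)^-1 <= ssum (unif S) G.
Proof.
move=> kS kG; have S0 : S != set0 by apply/set0Pn; exists k.
apply: le_trans (simplex_coord_le (simplex_unif S0) kG).
rewrite /unif sum_evecE kS mul1r lef_pV2 ?posrE ?ltr0n ?lt0n ?cards_eq0 //.
  by rewrite ler_nat -[X in (_ <= X)%N]card_ord max_card.
by apply/eqP => r0; move: k {kS kG}; rewrite r0 => -[].
Qed.

(* [dotp a y] is a convex combination of the [a 0 j], [j \in F]. *)
Lemma simplex_support_amax a F y i :
  simplexF F y -> (forall j, j \in F -> a 0 j <= dotp a y) -> y 0 i != 0 ->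
  i \in amax a F.
Proof.
move=> yF le_ay yi; have /simplexFP[y_ge0 y_out y1] := yF.
have iF : i \in F by apply: contraNT yi => /y_out ->.
have [k kF kmax] : exists2 k, k \in F & forall j, j \in F -> a 0 j <= a 0 k.
  by case: (arg_maxP (fun j => a 0 j) iF) => k; exists k.
have term_ge0 l : true -> 0 <= y 0 l * (a 0 k - a 0 l).
  case: (boolP (l \in F)) => lF _; last by rewrite y_out ?mul0r.
  by rewrite mulr_ge0 ?y_ge0 ?subr_ge0 ?kmax.
have sum_eq0 : \sum_l y 0 l * (a 0 k - a 0 l) = 0.
  apply/le_anti; rewrite sumr_ge0 // andbT; under eq_bigr do rewrite mulrBr.
  rewrite sumrB -mulr_suml -ssumT (simplex_ssum1 yF (subsetT F)) mul1r subr_le0.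
  by rewrite (le_trans (le_ay k kF)) // /dotp; under eq_bigr do rewrite mulrC.
have /eqP := psumr_eq0P term_ge0 sum_eq0 (i := i) isT.
rewrite mulf_eq0 (negbTE yi) subr_eq0 => /eqP aki.
by rewrite inE iF; apply/forall_inP => j jF; rewrite -aki kmax.
Qed.

End Simplex.

Section AffineDimension.
Variables (R : realFieldType) (r : nat).
Implicit Types (P Q : ptset R r) (ps qs X : seq 'rV[R]_r).

Lemma aff_indep_in_sub P Q p0 ps :
  (forall x, P x -> Q x) -> aff_indep_in P p0 ps -> aff_indep_in Q p0 ps.
Proof. by move=> PQ [Pp0 [Pps fr]]; split; [apply: PQ | split=> // q /Pps/PQ]. Qed.

Lemma has_dim_uniq P d1 d2 : has_dim P d1 -> has_dim P d2 -> d1 = d2.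
Proof.
move=> [[p1 [ps1 [h1 <-]]] ub1] [[p2 [ps2 [h2 <-]]] ub2].
by apply/eqP; rewrite eqn_leq (ub1 p2) ?(ub2 p1).
Qed.

Lemma has_dim_ext P Q d : (forall x, P x <-> Q x) -> has_dim P d -> has_dim Q d.
Proof.
move=> PQ [[p0 [ps [hps sz]]] ub]; split=> [|q0 qs /(aff_indep_in_sub (fun x => (PQ x).2))].
  by exists p0, ps; split=> //; apply: aff_indep_in_sub hps => x /PQ.
exact: ub.
Qed.

Lemma has_dim_intro P d :
  (exists p0 ps, aff_indep_in P p0 ps /\ (d <= size ps)%N) ->
  (forall p0 ps, aff_indep_in P p0 ps -> (size ps <= d)%N) -> has_dim P d.
Proof.
move=> [p0 [ps [hps le_d]]] ub; split=> //; exists p0, ps; split=> //.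
by apply/eqP; rewrite eqn_leq le_d (ub p0).
Qed.

Lemma free_size_leq_dim X (U : {vspace 'rV[R]_r}) :
  free X -> {subset X <= U} -> (size X <= \dim U)%N.
Proof. by move=> /eqP <- /span_subvP; apply: dimvS. Qed.

Lemma free_subseq_span p0 qs :
  exists2 ps, {subset ps <= qs} &
    free [seq q - p0 | q <- ps] /\
    <<[seq q - p0 | q <- ps]>>%VS = <<[seq q - p0 | q <- qs]>>%VS.
Proof.
elim: qs => [|q qs [ps sub [fr span_ps]]]; first by exists [::]; rewrite ?nil_free.
have sub' : {subset ps <= q :: qs} by move=> x /sub xqs; rewrite inE xqs orbT.
case: (boolP (q - p0 \in <<[seq q - p0 | q <- ps]>>%VS)) => qin.
  exists ps => //; split=> //=; rewrite span_cons -span_ps.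
  by apply/esym/addv_idPr; rewrite -memvE.
exists (q :: ps) => [x|/=]; first by rewrite !inE => /orP[->|/sub ->]; rewrite ?orbT.
by rewrite free_cons qin fr !span_cons span_ps.
Qed.

Lemma aff_indep_of_span P p0 qs X :
  P p0 -> (forall q, q \in qs -> P q) -> free X ->
  {subset X <= <<[seq q - p0 | q <- qs]>>%VS} ->
  exists ps, aff_indep_in P p0 ps /\ (size X <= size ps)%N.
Proof.
move=> Pp0 Pqs frX subX; have [ps sub [fr span_ps]] := free_subseq_span p0 qs.
exists ps; split; first by split=> //; split=> // q /sub/Pqs.
have := free_size_leq_dim frX subX.
by rewrite -span_ps (eqP fr) size_map.
Qed.

Lemma free_unit_coords (w : 'I_r -> 'rV[R]_r) (s : seq 'I_r) :
  uniq s -> (forall i j, j \in s -> w i 0 j = (i == j)%:R) ->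
  free [seq w i | i <- s].
Proof.
elim: s => [|i s IHs] /=; first by rewrite nil_free.
move=> /andP[nis us] wE; rewrite free_cons IHs ?andbT // => [|k j js]; last first.
  by rewrite wE // inE js orbT.
apply/negP => /(@coord_span _ _ _ (in_tuple _)) wi.
have := congr1 (fun v : 'rV[R]_r => v 0 i) wi.
rewrite wE ?mem_head // eqxx summxE big1 => [/eqP|k _]; first by rewrite oner_eq0.
have ks : (k < size s)%N by rewrite -(size_map w).
rewrite mxE /= (nth_map i) // wE ?mem_head //.
by case: eqP => [eik|]; [rewrite -eik mem_nth in nis | rewrite mulr0].
Qed.

End AffineDimension.

(* [blk] partitions ['I_r] into the blocks [block t], [rep t] is an element of
   [block t], and the [moves] [e_i - e_(rep (blk i))] span the directions along
   which every block sum is constant. *)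
Section Blocks.
Variables (R : realFieldType) (r : nat) (T : finType).
Variables (blk : 'I_r -> T) (rep : T -> 'I_r).
Hypothesis repK : cancel rep blk.

Definition block t : {set 'I_r} := [set i | blk i == t].

Definition moved : {set 'I_r} := [set i | rep (blk i) != i].

Definition moves : seq 'rV[R]_r :=
  [seq evec R i - evec R (rep (blk i)) | i <- enum moved].

Lemma rep_blk_fixed i : rep (blk (rep (blk i))) = rep (blk i).
Proof. by rewrite repK. Qed.

Lemma card_reps : #|[set rep t | t : T]| = #|T|.
Proof. exact/card_imset/can_inj/repK. Qed.

Lemma card_blocks_le : (#|T| <= r)%N.
Proof. by rewrite -card_reps -[X in (_ <= X)%N]card_ord max_card. Qed.

Lemma card_moved : #|moved| = (r - #|T|)%N.
Proof.
have -> : moved = ~: [set rep t | t : T].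
  apply/setP => i; rewrite !inE; congr negb; apply/eqP/imsetP => [<-|[t _ ->]].
    by exists (blk i).
  by rewrite repK.
by rewrite cardsCs setCK card_reps card_ord.
Qed.

Lemma free_moves : free moves.
Proof.
apply: free_unit_coords; first exact: enum_uniq.
move=> i j; rewrite mem_enum inE => jm; rewrite !mxE /= ![_ == j]eq_sym.
case: (eqVneq (rep (blk i)) j) => [eij|]; last by rewrite subr0.
by rewrite -eij rep_blk_fixed eqxx in jm.
Qed.

Lemma moves_span v : (forall t, ssum v (block t) = 0) -> v \in <<moves>>%VS.
Proof.
move=> v0.
have fibre0 j : \sum_(i | rep (blk i) == j) v 0 i = 0.
  case: (eqVneq (rep (blk j)) j) => [fj|nfj].
    rewrite -[RHS](v0 (blk j)); apply: eq_bigl => i; rewrite inE.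
    by apply/eqP/eqP => [<-|->]; rewrite ?repK.
  by rewrite big_pred0 // => i; apply: contraNF nfj => /eqP <-; rewrite rep_blk_fixed.
have -> : v = \sum_i v 0 i *: (evec R i - evec R (rep (blk i))).
  apply/rowP => j; rewrite summxE; under eq_bigr do rewrite !mxE mulrBr.
  rewrite sumrB (bigD1 j) //= big1 => [|i /negbTE ij]; last by rewrite eq_sym ij mulr0.
  have -> : \sum_i v 0 i * (j == rep (blk i))%:R = 0.
    rewrite -[RHS](fibre0 j) [RHS]big_mkcond; apply: eq_bigr => i _.
    by rewrite eq_sym; case: eqP; rewrite ?mulr1 ?mulr0.
  by rewrite eqxx mulr1 addr0 subr0.
apply: memv_suml => i _; apply: memvZ; case: (boolP (i \in moved)) => im.
  by apply: memv_span; apply: map_f; rewrite mem_enum.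
by move: im; rewrite inE negbK => /eqP ->; rewrite subrr mem0v.
Qed.

Lemma aff_indep_size_le_blocks (P : ptset R r) p0 ps :
  (forall x x', P x -> P x' -> forall t, ssum x (block t) = ssum x' (block t)) ->
  aff_indep_in P p0 ps -> (size ps + #|T| <= r)%N.
Proof.
move=> cst [Pp0 [Pps fr]]; rewrite addnC -leq_subRL ?card_blocks_le //.
have sub : {subset [seq q - p0 | q <- ps] <= <<moves>>%VS}.
  move=> _ /mapP[q qps ->]; apply: moves_span => t.
  by rewrite ssumB (cst q p0) ?subrr //; apply: Pps.
have := free_size_leq_dim fr sub.
by rewrite size_map (eqP free_moves) /moves size_map -cardE card_moved.
Qed.

Lemma has_dim_blocks (P : ptset R r) p0 qs :
  (forall x x', P x -> P x' -> forall t, ssum x (block t) = ssum x' (block t)) ->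
  P p0 -> (forall q, q \in qs -> P q) ->
  {subset moves <= <<[seq q - p0 | q <- qs]>>%VS} -> has_dim P (r - #|T|).
Proof.
move=> cst Pp0 Pqs sub; apply: has_dim_intro => [|q0 ps]; last first.
  by move/(aff_indep_size_le_blocks cst); rewrite addnC -leq_subRL // card_blocks_le.
have [ps [hps le_ps]] := aff_indep_of_span Pp0 Pqs free_moves sub.
by exists p0, ps; rewrite /moves size_map -cardE card_moved in le_ps.
Qed.

End Blocks.

Section BuildingClosure.
Variables (r : nat) (Fam : {set {set 'I_r}}).
Implicit Types (F G K : {set 'I_r}).

Definition crosses F K : bool := (F :&: K != set0) && ~~ (F \subset K).

Definition bconnected G : bool :=
  [forall K : {set 'I_r}, (K != set0) && (K \proper G) ==>
     [exists F in Fam, (F \subset G) && crosses F K]].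

Lemma bconnectedP G :
  reflect (forall K, K != set0 -> K \proper G ->
             exists2 F, F \in Fam & F \subset G /\ crosses F K)
          (bconnected G).
Proof.
apply: (iffP forallP) => [conn K K0 KG | conn K]; last first.
  apply/implyP => /andP[K0 KG]; have [F FF [FG cFK]] := conn K K0 KG.
  by apply/exists_inP; exists F; rewrite ?FG.
have /implyP/(_ (introT andP (conj K0 KG)))/exists_inP[F FF /andP[FG cFK]] := conn K.
by exists F.
Qed.

Lemma bconnected_closed G K :
  bconnected G -> K \subset G -> K != set0 ->
  (forall F, F \in Fam -> F \subset G -> F :&: K != set0 -> F \subset K) -> K = G.
Proof.
move=> /bconnectedP conn KG K0 closedK; apply/eqP; rewrite eqEsubset KG /=.
apply/negPn/negP => GnK.
have [|F FF [FG /andP[FK]]] := conn K K0; first by rewrite properE KG.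
by rewrite closedK.
Qed.

Lemma bconnected_crosses G G1 K :
  G1 \subset G -> bconnected G1 -> crosses G1 K ->
  exists2 F, F \in Fam & F \subset G /\ crosses F K.
Proof.
move=> G1G /bconnectedP conn /andP[G1K G1nK].
have [||F FF [FG1 /andP[FK FnK]]] := conn (K :&: G1); first by rewrite setIC.
  by rewrite properE subsetIr subsetI (negbTE G1nK).
exists F => //; split; first exact: subset_trans FG1 G1G.
apply/andP; split.
  by apply: contraNneq FK; rewrite setIA => ->; rewrite set0I.
by apply: contra FnK => FK'; rewrite subsetI FK' FG1.
Qed.

Lemma bconnectedU G1 G2 :
  bconnected G1 -> bconnected G2 -> G1 :&: G2 != set0 -> bconnected (G1 :|: G2).
Proof.
move=> conn1 conn2 /set0Pn[k /setIP[kG1 kG2]]; apply/bconnectedP => K K0 KG.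
have [c1|n1] := boolP (crosses G1 K).
  exact: bconnected_crosses (subsetUl G1 G2) conn1 c1.
have [c2|n2] := boolP (crosses G2 K).
  exact: bconnected_crosses (subsetUr G1 G2) conn2 c2.
(* The common point [k] puts both [G1] and [G2] inside [K] or both outside. *)
have outside (Gi : {set 'I_r}) : ~~ crosses Gi K -> (Gi :&: K == set0) || (Gi \subset K).
  by rewrite /crosses negb_and !negbK.
case: (boolP (k \in K)) => kK.
  have inK (Gi : {set 'I_r}) : k \in Gi -> ~~ crosses Gi K -> Gi \subset K.
    move=> kGi /outside/orP[/eqP GiK0|//].
    by move/setP: GiK0 => /(_ k); rewrite !inE kGi kK.
  by move: KG; rewrite properE subUset !inK ?andbF.
have outK (Gi : {set 'I_r}) : k \in Gi -> ~~ crosses Gi K -> Gi :&: K = set0.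
  move=> kGi /outside/orP[/eqP //|/subsetP/(_ k kGi)].
  by rewrite (negbTE kK).
move: K0; rewrite -(setIidPr (proper_sub KG)) setIUl outK ?outK //.
by rewrite setU0 eqxx.
Qed.

Hypothesis Fam_neq0 : forall F, F \in Fam -> F != set0.

Lemma bclosure_bconnected G : G \in bclosure Fam -> (G != set0) && bconnected G.
Proof.
rewrite inE => /forallP/(_ [set G | (G != set0) && bconnected G]).
rewrite inE => /implyP; apply; apply/and3P; split.
- apply/subsetP => F FF; rewrite inE Fam_neq0 //=; apply/bconnectedP => K K0 KF.
  exists F; rewrite // subxx; split=> //; rewrite /crosses.
  by move: KF; rewrite properE => /andP[/setIidPr -> ->]; rewrite K0.
- apply/forallP => i; rewrite inE; apply/andP; split; first by apply/set0Pn; exists i; rewrite inE.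
  apply/bconnectedP => K K0; rewrite properE subset1 (negbTE K0) orbF.
  by case/andP => /eqP ->; rewrite subxx.
apply/forall_inP => G1; rewrite inE => /andP[G10 conn1].
apply/forall_inP => G2; rewrite inE => /andP[G20 conn2].
by apply/implyP => G12; rewrite inE bconnectedU // andbT setU_eq0 negb_and G10.
Qed.

Lemma bconnected_bclosure G : G != set0 -> bconnected G -> G \in bclosure Fam.
Proof.
move=> /set0Pn[g gG] /bconnectedP conn; rewrite inE; apply/forallP => H.
apply/implyP => /and3P[/subsetP FamH /forallP H1 /forall_inP HU].
pose P G' := [&& g \in G', G' \subset G & G' \in H].
have Pg : P [set g] by rewrite /P set11 sub1set gG H1.
case: (arg_maxnP (fun G' => #|G'|) Pg) => M /and3P[gM MG MH] Mmax.
case: (eqVneq M G) => [<- //|MnG]; exfalso.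
have [||F FF [FG /andP[FM FnM]]] := conn M; first by apply/set0Pn; exists g.
  by rewrite properEneq MnG.
have MFH : M :|: F \in H.
  by move: (HU M MH) => /forall_inP/(_ F (FamH F FF))/implyP; apply; rewrite setIC.
have := Mmax (M :|: F); rewrite /P inE gM subUset MG FG MFH => /(_ isT).
apply/negP; rewrite -ltnNge; apply: proper_card.
by rewrite properE subsetUl subUset subxx.
Qed.

Lemma bclosureE G : (G \in bclosure Fam) = (G != set0) && bconnected G.
Proof.
apply/idP/andP => [/bclosure_bconnected/andP//|[]]; exact: bconnected_bclosure.
Qed.

End BuildingClosure.

Section Vertices.
Variables (R : realFieldType) (r : nat) (Fam : {set {set 'I_r}}).
Implicit Types (x : 'rV[R]_r) (F G : {set 'I_r}) (c : {set 'I_r} -> 'I_r).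

Lemma nFsubE G : nFsub R Fam G = \sum_(F in Fam) (F \subset G)%:R.
Proof.
rewrite /nFsub -sum1_card natr_sum big_mkcond [RHS]big_mkcond /=.
by apply: eq_bigr => F _; rewrite inE; case: (F \in Fam); case: (F \subset G).
Qed.

Lemma DeltaFam_ssum_ge x G : DeltaFam Fam x -> nFsub R Fam G <= ssum x G.
Proof.
move=> [y [yF ->]]; rewrite ssum_sum nFsubE; apply: ler_sum => F FF.
exact: simplex_ssum_ge (yF F FF).
Qed.

Lemma DeltaFam_ssumT x : DeltaFam Fam x -> ssum x [set: 'I_r] = #|Fam|%:R.
Proof.
move=> [y [yF ->]]; rewrite ssum_sum -sum1_card natr_sum; apply: eq_bigr => F FF.
exact: simplex_ssum1 (yF F FF) (subsetT F).
Qed.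

Lemma Gface_face G : face (DeltaFam (R:=R) Fam) (Gface Fam G).
Proof.
pose a : 'rV[R]_r := \row_i (if i \in G then -1 else 0).
have dotpE x : dotp a x = - ssum x G.
  rewrite /dotp /ssum -sumrN [RHS]big_mkcond; apply: eq_bigr => i _; rewrite mxE.
  by case: (i \in G); rewrite ?mulN1r ?mul0r ?oppr0.
exists a, (- nFsub R Fam G); split=> [x Dx|x]; first by rewrite dotpE lerN2 DeltaFam_ssum_ge.
by rewrite dotpE; split=> -[Dx e]; split=> //; [rewrite /ssum e | apply: oppr_inj].
Qed.

Definition vtx c : 'rV[R]_r := \sum_(F in Fam) evec R (c F).

Definition upd c F0 j : {set 'I_r} -> 'I_r := fun F => if F == F0 then j else c F.

(* Choosing the vertex [e_j] of the summand [Delta_F] is compatible with the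
   face [Gface Fam G]. *)
Definition tight_at G F j : bool := (j \in F) && ((j \in G) == (F \subset G)).

Lemma vtx_DeltaFam c : {in Fam, forall F, c F \in F} -> DeltaFam Fam (vtx c).
Proof. by move=> cF; exists (fun F => evec R (c F)); split=> // F /cF/simplex_evec. Qed.

Lemma Gface_vtxP G c :
  {in Fam, forall F, c F \in F} ->
  Gface Fam G (vtx c) <-> {in Fam, forall F, tight_at G F (c F)}.
Proof.
move=> cF; have ssum_vtx : ssum (vtx c) G = \sum_(F in Fam) (c F \in G)%:R.
  by rewrite ssum_sum; apply: eq_bigr => F _; rewrite ssum_evec.
split=> [[_ sE] F FF|tc]; last first.
  split; first exact: vtx_DeltaFam.
  rewrite -/(ssum _ G) ssum_vtx nFsubE; apply: eq_bigr => F FF.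
  by have /andP[_ /eqP ->] := tc F FF.
rewrite /tight_at cF //=.
have le_term F' : F' \in Fam -> 0 <= ((c F' \in G)%:R - (F' \subset G)%:R : R).
  move=> F'F; rewrite subr_ge0 ler_nat.
  by case: (boolP (F' \subset G)) => // /subsetP/(_ _ (cF F' F'F)) ->.
have sum0 : \sum_(F' in Fam) ((c F' \in G)%:R - (F' \subset G)%:R : R) = 0.
  by rewrite sumrB -ssum_vtx -nFsubE /ssum sE subrr.
have /eqP := psumr_eq0P le_term sum0 FF.
by rewrite subr_eq0 eqr_nat; case: (c F \in G); case: (F \subset G).
Qed.

Lemma vtx_upd c F0 j :
  F0 \in Fam -> vtx (upd c F0 j) - vtx c = evec R j - evec R (c F0).
Proof.
move=> F0F; rewrite /vtx (bigD1 F0) //= [X in _ - X](bigD1 F0) //= /upd eqxx.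
rewrite opprD addrACA -sumrB big1 ?addr0 // => F /andP[_ /negbTE ->].
by rewrite subrr.
Qed.

Lemma tight_at_upd G c F0 j :
  {in Fam, forall F, tight_at G F (c F)} -> tight_at G F0 j ->
  {in Fam, forall F, tight_at G F (upd c F0 j F)}.
Proof. by move=> tc tj F FF; rewrite /upd; case: eqP => [->|_]; last exact: tc. Qed.

Lemma tight_at_choice G c :
  {in Fam, forall F, tight_at G F (c F)} -> {in Fam, forall F, c F \in F}.
Proof. by move=> tc F /tc/andP[]. Qed.

Definition tight_vtxs G c : seq 'rV[R]_r :=
  [seq vtx (upd c F j) | F <- enum Fam, j <- enum [set j | tight_at G F j]].

Lemma Gface_tight_vtxs G c q :
  {in Fam, forall F, tight_at G F (c F)} -> q \in tight_vtxs G c -> Gface Fam G q.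
Proof.
move=> tc /allpairsPdep[F [j [_ + ->]]]; rewrite mem_enum inE => tj.
have tc' := tight_at_upd tc tj.
exact/(Gface_vtxP G (tight_at_choice tc')).
Qed.

Lemma evecB_tight_span G c F j k :
  F \in Fam -> tight_at G F j -> tight_at G F k ->
  evec R j - evec R k \in <<[seq q - vtx c | q <- tight_vtxs G c]>>%VS.
Proof.
move=> FF tj tk; have -> : evec R j - evec R k =
    (evec R j - evec R (c F)) - (evec R k - evec R (c F)) by rewrite opprB addrA subrK.
rewrite -!(vtx_upd _ _ FF); apply: memvB; apply/memv_span/map_f;
  by apply: (allpairs_f_dep (fun F j => vtx (upd c F j))); rewrite mem_enum ?inE.
Qed.

Hypothesis Fam_neq0 : forall F, F \in Fam -> F != set0.

Lemma exists_tight G (h : 'I_r) :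
  exists c, {in Fam, forall F, tight_at G F (c F)}.
Proof.
suff /fin_all_exists[c tc] : forall F, exists j, F \in Fam -> tight_at G F j.
  by exists c => F /tc.
move=> F; case: (boolP (F \in Fam)) => FF; last by exists h.
case: (boolP (F \subset G)) => FG.
  have /set0Pn[j jF] := Fam_neq0 FF; exists j => _.
  by rewrite /tight_at jF (subsetP FG) ?FG.
have /subsetPn[j jF jG] := FG; exists j => _.
by rewrite /tight_at jF (negbTE jG) (negbTE FG).
Qed.

End Vertices.

Section FacesOfDeltaFam.
Variables (R : realFieldType) (r : nat) (Fam : {set {set 'I_r}}).
Hypothesis Fam_neq0 : forall F, F \in Fam -> F != set0.
Hypothesis setT_in_Fam : [set: 'I_r] \in Fam.
Implicit Types (G : {set 'I_r}) (i : 'I_r).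

Lemma tight_at_setT G i : i \notin G -> tight_at G [set: 'I_r] i.
Proof.
move=> iG; rewrite /tight_at in_setT (negbTE iG) eq_sym eqbF_neg.
by apply: contra iG => /subsetP; apply; rewrite in_setT.
Qed.

Lemma dim_DeltaFam : has_dim (DeltaFam (R:=R) Fam) r.-1.
Proof.
have /set0Pn[h _] := Fam_neq0 setT_in_Fam.
have [c tc] := exists_tight Fam_neq0 [set: 'I_r] h.
have repK : cancel (fun=> h) (fun=> tt) by case.
rewrite -subn1 -card_unit.
apply: (has_dim_blocks repK (p0 := vtx R Fam c) (qs := tight_vtxs R Fam [set: 'I_r] c)).
- move=> x x' Dx Dx' []; rewrite (_ : block _ tt = [set: 'I_r]); last first.
    by apply/setP => i; rewrite !inE.
  by rewrite (DeltaFam_ssumT Dx) (DeltaFam_ssumT Dx').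
- exact/vtx_DeltaFam/(tight_at_choice tc).
- by move=> q /(Gface_tight_vtxs tc)[].
move=> _ /mapP[i _ ->]; apply: (evecB_tight_span _ _ setT_in_Fam);
  by rewrite /tight_at !in_setT subxx.
Qed.

Lemma dim_Gface G :
  G \in bclosure Fam -> G != [set: 'I_r] -> has_dim (Gface (R:=R) Fam G) (r - 2).
Proof.
rewrite bclosureE // => /andP[/set0Pn[g gG] conn] GnT.
have /subsetPn[h _ hG] : ~~ ([set: 'I_r] \subset G).
  by apply: contra GnT => TG; rewrite eqEsubset subsetT.
pose blk i := i \in G; pose rep (b : bool) := if b then g else h.
have repK : cancel rep blk by case; rewrite /blk /rep ?gG ?(negbTE hG).
have blockE b : block blk b = if b then G else ~: G.
  by apply/setP => i; case: b; rewrite !inE ?eqb_id ?eqbF_neg.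
have [c tc] := exists_tight Fam_neq0 G h.
pose W := <<[seq q - vtx R Fam c | q <- tight_vtxs R Fam G c]>>%VS.
rewrite -card_bool; apply: (has_dim_blocks repK (p0 := vtx R Fam c) (qs := tight_vtxs R Fam G c)).
- move=> x x' [Dx sx] [Dx' sx'] b; rewrite blockE; case: b; first by rewrite /ssum sx sx'.
  by rewrite !ssumC (DeltaFam_ssumT Dx) (DeltaFam_ssumT Dx') /ssum sx sx'.
- exact/(Gface_vtxP R G (tight_at_choice tc)).
- by move=> q; apply: Gface_tight_vtxs.
move=> _ /mapP[i _ ->]; rewrite /rep /blk; case: (boolP (i \in G)) => iG; last first.
  by apply: evecB_tight_span setT_in_Fam _ _; apply: tight_at_setT.
(* Inside [G], the directions [e_k - e_g] lying in [W] spread along the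
   members of [Fam] contained in [G], hence over all of [G] by connectedness. *)
pose K := [set k in G | evec R k - evec R g \in W].
suff KG : K = G by move: iG; rewrite -{1}KG inE => /andP[].
apply: bconnected_closed conn _ _ _; first by apply/subsetP => k; rewrite inE => /andP[].
  by apply/set0Pn; exists g; rewrite inE gG subrr mem0v.
move=> F FF FG /set0Pn[k /setIP[kF]]; rewrite inE => /andP[kG kW].
have tF j : j \in F -> tight_at G F j by move=> jF; rewrite /tight_at jF (subsetP FG) ?FG.
apply/subsetP => j jF; rewrite inE (subsetP FG) //=.
have -> : evec R j - evec R g = (evec R j - evec R k) + (evec R k - evec R g).
  by rewrite addrA subrK.
by rewrite memvD // (evecB_tight_span _ _ FF) ?tF.
Qed.

Lemma Gface_facet G :
  G \in bclosure Fam -> G != [set: 'I_r] -> facet (DeltaFam (R:=R) Fam) (Gface Fam G).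
Proof.
move=> GB GnT; split; first exact: Gface_face.
exists (r - 2)%N; split; last exact: dim_Gface.
suff r_ge2 : (2 <= r)%N by rewrite -subSn // subSS subn1; exact: dim_DeltaFam.
have /andP[/set0Pn[g gG] _] := bclosure_bconnected Fam_neq0 GB.
have /subsetPn[h _ hG] : ~~ ([set: 'I_r] \subset G).
  by apply: contra GnT => TG; rewrite eqEsubset subsetT.
have gh : g != h by apply: contraNneq hG => <-.
by have := subset_leq_card (subsetT [set g; h]); rewrite cards2 cardsT card_ord gh.
Qed.

Lemma Gface_subset G1 G2 :
  G1 != [set: 'I_r] -> (forall x, Gface (R:=R) Fam G2 x -> Gface Fam G1 x) ->
  G1 \subset G2.
Proof.
move=> G1nT sub; apply/subsetP => i iG1; apply/negPn/negP => iG2.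
have [c tc] := exists_tight Fam_neq0 G2 i.
have tc' := tight_at_upd tc (tight_at_setT iG2).
have cF := tight_at_choice tc'.
have /sub/(Gface_vtxP R G1 cF)/(_ _ setT_in_Fam) := (Gface_vtxP R G2 cF).2 tc'.
rewrite /tight_at /upd eqxx in_setT iG1 /= eq_sym => /eqP TG1.
by move: G1nT; rewrite eqEsubset subsetT TG1.
Qed.

Lemma Gface_inj G1 G2 :
  G1 != [set: 'I_r] -> G2 != [set: 'I_r] ->
  seteqP (Gface (R:=R) Fam G1) (Gface (R:=R) Fam G2) -> G1 = G2.
Proof.
move=> G1nT G2nT E; apply/eqP; rewrite eqEsubset.
by rewrite !Gface_subset // => x /E.
Qed.

End FacesOfDeltaFam.

Section Irredundance.
Variables (R : realFieldType) (r : nat) (Fam : {set {set 'I_r}}).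
Hypothesis Fam_neq0 : forall F, F \in Fam -> F != set0.
Hypothesis setT_in_Fam : [set: 'I_r] \in Fam.
Variable G0 : {set 'I_r}.
Hypothesis G0_bclosure : G0 \in bclosure Fam.
Hypothesis G0_neqT : G0 != [set: 'I_r].
Implicit Types (F G : {set 'I_r}).

(* The witness puts the mass of [F] on [F] if [F] lies in [G0] and on
   [F :\: G0] otherwise, which is tight for [G0] and leaves slack at least [1/r]
   in every other inequality of the building closure; then it moves mass [1/r]
   from [G0] to its complement. *)
Definition trunc F : {set 'I_r} := if F \subset G0 then F else F :\: G0.

Lemma trunc_neq0 F : F \in Fam -> trunc F != set0.
Proof.
move=> FF; rewrite /trunc; case: ifPn => FG0; first exact: Fam_neq0.
by have /subsetPn[j jF jG0] := FG0; apply/set0Pn; exists j; rewrite inE jG0.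
Qed.

Lemma trunc_sub F : trunc F \subset F.
Proof. by rewrite /trunc; case: ifP => // _; apply: subsetDl. Qed.

Lemma exists_slack G :
  G \in bclosure Fam -> G != G0 -> G != [set: 'I_r] ->
  exists2 F, F \in Fam & ~~ (F \subset G) /\ trunc F :&: G != set0.
Proof.
move=> GB GG0 GT; case: (boolP (G \subset G0)) => GsG0; last first.
  have /subsetPn[k kG kG0] := GsG0; exists [set: 'I_r] => //; split.
    by apply: contra GT => TG; rewrite eqEsubset subsetT.
  rewrite /trunc; case: ifP => [/subsetP/(_ k (in_setT k))|_]; first by rewrite (negbTE kG0).
  by apply/set0Pn; exists k; rewrite !inE kG0 kG.
move: G0_bclosure GB; rewrite !bclosureE // => /andP[_ /bconnectedP conn] /andP[G_0 _].
have [|F FF [FG0 /andP[FG FnG]]] := conn G G_0; first by rewrite properEneq GG0.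
by exists F; rewrite // /trunc FG0.
Qed.

Section Witness.
Variables (g h : 'I_r).
Hypotheses (g_in : g \in G0) (h_notin : h \notin G0).

Local Notation eps := ((r%:R)^-1 : R).

Definition witness : 'rV[R]_r :=
  \sum_(F in Fam) unif R (trunc F) + eps *: (evec R h - evec R g).

Lemma eps_gt0 : 0 < eps.
Proof. by rewrite invr_gt0 ltr0n (leq_ltn_trans (leq0n h)). Qed.

Lemma unif_trunc F : F \in Fam -> simplexF (trunc F) (unif R (trunc F)).
Proof. by move=> FF; apply/simplex_unif/trunc_neq0. Qed.

Lemma ssum_witness G :
  ssum witness G =
  \sum_(F in Fam) ssum (unif R (trunc F)) G + eps * ((h \in G)%:R - (g \in G)%:R).
Proof. by rewrite ssumD ssum_sum ssumZ ssumB !ssum_evec. Qed.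

Lemma witness_total : \sum_(i < r) witness 0 i = #|Fam|%:R.
Proof.
rewrite -ssumT ssum_witness !in_setT subrr mulr0 addr0 -sum1_card natr_sum.
by apply: eq_bigr => F FF; apply: simplex_ssum1 (unif_trunc FF) (subsetT _).
Qed.

Lemma witness_G0 : ssum witness G0 < nFsub R Fam G0.
Proof.
rewrite ssum_witness g_in (negbTE h_notin) sub0r mulrN1.
have -> : \sum_(F in Fam) ssum (unif R (trunc F)) G0 = nFsub R Fam G0.
  rewrite nFsubE; apply: eq_bigr => F FF; have := unif_trunc FF.
  rewrite /trunc; case: ifPn => FG0 uF; first exact: simplex_ssum1 uF FG0.
  have /simplexFP[_ u_out _] := uF; rewrite (ssum_supp _ u_out).
  by rewrite (_ : G0 :&: _ = set0) ?/ssum ?big_set0 // setDE setICA setICr setI0.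
by rewrite gtrDl oppr_lt0 eps_gt0.
Qed.

Lemma witness_ge G :
  G \in bclosure Fam -> G != G0 -> nFsub R Fam G <= ssum witness G.
Proof.
move=> GB GG0; case: (eqVneq G [set: 'I_r]) => [->|GT].
  rewrite ssumT witness_total ler_nat subset_leq_card //.
  by apply/subsetP => F; rewrite inE => /andP[].
have unif_ge F : F \in Fam -> ((F \subset G)%:R : R) <= ssum (unif R (trunc F)) G.
  move=> FF; apply: le_trans (simplex_ssum_ge G (unif_trunc FF)); rewrite ler_nat.
  by case: (boolP (F \subset G)) => // FG; rewrite (subset_trans (trunc_sub F) FG).
have [F1 F1F [F1G /set0Pn[k /setIP[kF1 kG]]]] := exists_slack GB GG0 GT.
rewrite ssum_witness nFsubE (bigD1 F1) //= [X in _ <= X + _](bigD1 F1) //=.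
rewrite (negbTE F1G) add0r addrAC addrC.
apply: ler_wpDr; last by apply: ler_sum => F /andP[FF _]; apply: unif_ge.
have F1_ge : eps <= ssum (unif R (trunc F1)) G by apply: unif_ssum_ge kF1 kG.
have d_ge : - eps <= eps * ((h \in G)%:R - (g \in G)%:R).
  have := eps_gt0; case: (h \in G); case: (g \in G);
    by rewrite /= ?subrr ?subr0 ?sub0r ?mulr0 ?mulr1 ?mulrN1 => eps_gt0; lra.
by rewrite -(subrr eps); apply: lerD.
Qed.

End Witness.

Lemma Gface_irredundant :
  exists x : 'rV[R]_r, Hsys Fam (bclosure Fam :\ G0) x /\ ~ Hsys Fam (bclosure Fam) x.
Proof.
have /andP[/set0Pn[g gG0] _] := bclosure_bconnected Fam_neq0 G0_bclosure.
have /subsetPn[h _ hG0] : ~~ ([set: 'I_r] \subset G0).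
  by apply: contra G0_neqT => TG0; rewrite eqEsubset subsetT.
exists (witness g h); split.
  split=> [|G]; first exact: witness_total.
  by rewrite in_setD1 => /andP[GG0 GB]; apply: witness_ge.
case=> _ /(_ G0 G0_bclosure); apply/negP; rewrite -ltNge.
exact: witness_G0.
Qed.

End Irredundance.

Section SupportingHyperplane.
Variables (R : realFieldType) (r : nat) (Fam : {set {set 'I_r}}).
Hypothesis Fam_neq0 : forall F, F \in Fam -> F != set0.
Variables (a : 'rV[R]_r) (b : R).
Hypothesis a_le : forall x, DeltaFam Fam x -> dotp a x <= b.
Implicit Types (x : 'rV[R]_r) (B F G : {set 'I_r}).

Lemma face_support (y : {set 'I_r} -> 'rV[R]_r) F i :
  (forall F, F \in Fam -> simplexF F (y F)) -> dotp a (\sum_(F in Fam) y F) = b ->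
  F \in Fam -> y F 0 i != 0 -> i \in amax a F.
Proof.
move=> yF eb FF yi; apply: simplex_support_amax (yF F FF) _ yi => j jF.
pose y' F' := if F' == F then evec R j else y F'.
have D' : DeltaFam Fam (\sum_(F' in Fam) y' F').
  exists y'; split=> // F' F'F; rewrite /y'.
  by case: eqP => [->|_]; [exact: simplex_evec | exact: yF].
have := a_le D'; rewrite (bigD1 F) //= /y' eqxx (eq_bigr y) => [|F' /andP[_ /negbTE ->] //].
by rewrite -eb [in X in _ <= X](bigD1 F) //= !dotpD dotp_evec lerD2r.
Qed.

Definition compatible B : Prop :=
  forall F, F \in Fam -> (amax a F \subset B) || [disjoint amax a F & B].

Lemma face_ssum_compatible B x :
  compatible B -> DeltaFam Fam x -> dotp a x = b ->
  ssum x B = \sum_(F in Fam) (amax a F \subset B)%:R.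
Proof.
move=> cB [y [yF ->]] eb; rewrite ssum_sum; apply: eq_bigr => F FF.
have supp i : i \notin amax a F -> y F 0 i = 0.
  by move=> iA; apply/eqP; apply: contraNT iA; apply: face_support.
rewrite (ssum_supp _ supp); case: (boolP (amax a F \subset B)) => AB.
  rewrite (setIidPr AB) -(simplex_ssum1 (yF F FF) (subxx F)) [RHS](ssum_supp _ supp).
  by rewrite (setIidPr (amax_sub a F)).
have /orP[|/disjoint_setI0 AB0] := cB F FF; first by rewrite (negbTE AB).
by rewrite setIC AB0 /ssum big_set0.
Qed.

Lemma compatible_amaxT : compatible (amax a [set: 'I_r]).
Proof. by move=> F _; apply/amax_compatible_in/subsetT. Qed.

Lemma compatible_outside B :
  B \subset ~: amax a [set: 'I_r] ->
  (forall F, F \in Fam -> F \subset ~: amax a [set: 'I_r] ->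
     (amax a F \subset B) || [disjoint amax a F & B]) ->
  compatible B.
Proof.
move=> BA cB F FF; case: (boolP (F \subset ~: amax a [set: 'I_r])) => FA; first exact: cB.
have /subsetPn[k kF] := FA; rewrite inE negbK => kA.
rewrite disjoint_sym (disjointWl BA) ?orbT //.
by rewrite disjoint_sym disjoints_subset setCK (amax_subset (subsetT F) kF kA).
Qed.

Hypothesis setT_in_Fam : [set: 'I_r] \in Fam.

Lemma face_two_levels G t m p0 :
  (forall i, i \in G -> a 0 i = t) -> (forall i, i \notin G -> a 0 i = m) ->
  t < m -> DeltaFam Fam p0 -> dotp a p0 = b ->
  forall x, DeltaFam Fam x /\ dotp a x = b <-> Gface Fam G x.
Proof.
move=> aG aGc tm Dp0 ep0.
have /set0Pn[h _] := Fam_neq0 setT_in_Fam.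
have [c tc] := exists_tight Fam_neq0 G h.
have [Dv sv] := (Gface_vtxP R G (tight_at_choice tc)).2 tc.
have dotpE x : DeltaFam Fam x -> dotp a x = m * #|Fam|%:R - (m - t) * ssum x G.
  by move=> Dx; rewrite (dotp_two_levels x aG aGc) (DeltaFam_ssumT Dx).
have mt : 0 < m - t by rewrite subr_gt0.
have p0G : ssum p0 G = nFsub R Fam G.
  apply/le_anti; rewrite DeltaFam_ssum_ge // andbT.
  by have := a_le Dv; rewrite -ep0 !dotpE // lerD2l lerN2 ler_pM2l // /ssum sv.
move=> x; split=> [[Dx ex]|[Dx sx]]; split=> //; last first.
  by rewrite -ep0 !dotpE // -[ssum x G]/(\sum_(i in G) x 0 i) sx p0G.
move: ex; rewrite -ep0 !dotpE // => /addrI/oppr_inj/(mulfI (lt0r_neq0 mt)).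
by rewrite -p0G.
Qed.

End SupportingHyperplane.

Section Facets.
Variables (R : realFieldType) (r : nat) (Fam : {set {set 'I_r}}).
Hypothesis Fam_neq0 : forall F, F \in Fam -> F != set0.
Hypothesis setT_in_Fam : [set: 'I_r] \in Fam.
Variables (a : 'rV[R]_r) (b : R) (S : ptset R r) (d : nat).
Hypothesis a_le : forall x, DeltaFam Fam x -> dotp a x <= b.
Hypothesis S_face : seteqP S (fun x => DeltaFam Fam x /\ dotp a x = b).
Hypothesis DeltaFam_dim : has_dim (DeltaFam (R:=R) Fam) d.+1.
Hypothesis S_dim : has_dim S d.
Implicit Types (B G : {set 'I_r}).

Local Notation A := (amax a [set: 'I_r]).

Lemma amaxT_neq0 : A != set0.
Proof. exact/amax_neq0/Fam_neq0. Qed.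

(* Three compatible blocks would cut the dimension of [S] down to [r - 3]. *)
Lemma compatible_block B :
  compatible Fam a B -> [disjoint A & B] -> B != set0 -> B = ~: A.
Proof.
move=> cB dAB /set0Pn[b2 b2B]; apply/eqP; rewrite eqEsubset -disjoints_subset disjoint_sym dAB.
apply/negPn/negP => /subsetPn[b3]; rewrite inE => b3A b3B.
have /set0Pn[b1 b1A] := amaxT_neq0.
have b2A : b2 \notin A by apply: contraTN b2B => /(disjointFr dAB) ->.
pose blk i := if i \in A then None else Some (i \in B).
pose rep (o : option bool) := if o is Some c then (if c then b2 else b3) else b1.
have repK : cancel rep blk.
  by case=> [[]|]; rewrite /blk /= ?b1A ?(negbTE b2A) ?(negbTE b3A) ?b2B ?(negbTE b3B).
have blockE o : block blk o = if o is Some c then (if c then B else ~: (A :|: B)) else A.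
  apply/setP => i; rewrite [in LHS]inE /blk; case: ifPn => iA.
    by case: o => [[]|]; rewrite ?in_setC ?in_setU ?iA ?(disjointFr dAB iA).
  by case: o => [[]|]; rewrite ?in_setC ?in_setU ?(negbTE iA) //=; case: (i \in B).
have cst x x' : S x -> S x' -> forall o, ssum x (block blk o) = ssum x' (block blk o).
  move=> /S_face[Dx ex] /S_face[Dx' ex'] o; rewrite blockE.
  have cA : compatible Fam a A by exact: compatible_amaxT.
  have sA : ssum x A = ssum x' A by rewrite !(face_ssum_compatible a_le cA).
  have sB : ssum x B = ssum x' B by rewrite !(face_ssum_compatible a_le cB).
  case: o => [[]|] //; rewrite !ssumC !ssumU // (DeltaFam_ssumT Dx) (DeltaFam_ssumT Dx').
  by rewrite sA sB.
have [[p0 [ps [hps sz]]] _] := S_dim.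
have := aff_indep_size_le_blocks repK cst hps; rewrite card_option card_bool sz.
have := has_dim_uniq DeltaFam_dim (dim_DeltaFam R Fam_neq0 setT_in_Fam); lia.
Qed.

Lemma face_inhabited : exists2 p0, DeltaFam Fam p0 & dotp a p0 = b.
Proof.
by have [[p0 [ps [[/S_face[Dp0 ep0] _] _]]] _] := S_dim; exists p0.
Qed.

Lemma compl_amaxT_neq0 : ~: A != set0.
Proof.
apply/negP => /eqP A_T; have [p0 Dp0 ep0] := face_inhabited.
have /set0Pn[b1 b1A] := amaxT_neq0.
have dotpE x : dotp a x = a 0 b1 * ssum x [set: 'I_r].
  rewrite (dotp_two_levels x (G := set0) (t := a 0 b1) (m := a 0 b1)) => [||i _].
  - by rewrite subrr mul0r subr0.
  - by move=> i; rewrite inE.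
  by apply/amax_eq/b1A; apply/negPn; rewrite -in_setC A_T inE.
(* [a] is constant on [DeltaFam], so [S] would be all of it. *)
have S_DeltaFam x : DeltaFam Fam x <-> S x.
  split=> [Dx|/S_face[] //]; apply/S_face; split=> //.
  by rewrite -ep0 !dotpE (DeltaFam_ssumT Dx) (DeltaFam_ssumT Dp0).
have := has_dim_uniq S_dim (has_dim_ext S_DeltaFam DeltaFam_dim); lia.
Qed.

Lemma compatible_compl_amaxT B :
  B \subset ~: A -> B != set0 ->
  (forall F, F \in Fam -> F \subset ~: A ->
     (amax a F \subset B) || [disjoint amax a F & B]) ->
  B = ~: A.
Proof.
move=> BG B0 cB; have cB' : compatible Fam a B by apply: compatible_outside.
by apply: compatible_block cB' _ B0; rewrite disjoint_sym disjoints_subset.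
Qed.

Lemma amax_compl_amaxT : amax a (~: A) = ~: A.
Proof.
apply: compatible_compl_amaxT (amax_sub a _) _ _; first exact/amax_neq0/compl_amaxT_neq0.
by move=> F _ FG; apply: amax_compatible_in.
Qed.

Lemma compl_amaxT_bconnected : bconnected Fam (~: A).
Proof.
apply/bconnectedP => K K0 KsG.
have [/exists_inP[F FF /andP[FG cFK]]|noF] :=
  boolP [exists F in Fam, (F \subset ~: A) && crosses F K]; first by exists F.
suff KeqG : K = ~: A by move: KsG; rewrite KeqG properE subxx andbF.
apply: compatible_compl_amaxT (proper_sub KsG) K0 _ => F FF FG.
move/exists_inPn/(_ F FF): noF; rewrite FG /= /crosses negb_and !negbK.
case/orP => [FK0|FK]; last by rewrite (subset_trans (amax_sub a F) FK).
by rewrite (disjointWl (amax_sub a F)) ?orbT // -setI_eq0.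
Qed.

Lemma face_is_Gface :
  exists2 G, G \in bclosure Fam & G != [set: 'I_r] /\ seteqP S (Gface Fam G).
Proof.
have [p0 Dp0 ep0] := face_inhabited.
have /set0Pn[b1 b1A] := amaxT_neq0.
have /set0Pn[g1 g1G] := amax_neq0 a compl_amaxT_neq0.
have aA i : i \notin ~: A -> a 0 i = a 0 b1 by rewrite inE negbK => /amax_eq; apply.
have aG i : i \in ~: A -> a 0 i = a 0 g1.
  by rewrite -{1}amax_compl_amaxT => /amax_eq; apply.
have t_lt_m : a 0 g1 < a 0 b1.
  have := subsetP (amax_sub a _) g1 g1G; rewrite in_setC inE in_setT => /forall_inPn[j _].
  rewrite -ltNge => /lt_le_trans; apply; move/setIdP: b1A => [_ /forall_inP]; apply.
  by rewrite in_setT.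
exists (~: A); first by rewrite bclosureE // compl_amaxT_neq0 compl_amaxT_bconnected.
split; first by apply: contraTneq b1A => AT; rewrite -[b1 \in A]negbK -in_setC AT in_setT.
have faceE := face_two_levels Fam_neq0 a_le setT_in_Fam aG aA t_lt_m Dp0 ep0.
by move=> x; split=> [/S_face/faceE|/faceE/S_face].
Qed.

End Facets.

Lemma facet_Gface (R : realFieldType) r (Fam : {set {set 'I_r}}) (S : ptset R r) :
  (forall F, F \in Fam -> F != set0) -> [set: 'I_r] \in Fam ->
  facet (DeltaFam (R:=R) Fam) S ->
  exists2 G, G \in bclosure Fam & G != [set: 'I_r] /\ seteqP S (Gface Fam G).
Proof.
move=> Fam_neq0 setT_in_Fam [[a [b [a_le S_face]]] [d [dim_Delta dim_S]]].
exact: (face_is_Gface (d := d) Fam_neq0 setT_in_Fam a_le S_face dim_Delta dim_S).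
Qed.

Unset Implicit Arguments.
Set Strict Implicit.

Theorem corollary3p13 (R : realFieldType) (r : nat)
  (Fam : {set {set 'I_r}})
  (Hne : forall F, F \in Fam -> F != set0)
  (Htop : [set: 'I_r] \in Fam) :
  has_dim (DeltaFam (R:=R) Fam) r.-1 /\
  (forall G, G \in bclosure Fam -> G != [set: 'I_r] ->
     facet (DeltaFam (R:=R) Fam) (Gface (R:=R) Fam G)) /\
  (forall G1 G2, G1 \in bclosure Fam -> G2 \in bclosure Fam ->
     G1 != [set: 'I_r] -> G2 != [set: 'I_r] ->
     seteqP (Gface (R:=R) Fam G1) (Gface (R:=R) Fam G2) -> G1 = G2) /\
  (forall S, facet (DeltaFam (R:=R) Fam) S ->
     exists2 G, G \in bclosure Fam &
       G != [set: 'I_r] /\ seteqP S (Gface (R:=R) Fam G)) /\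
  (forall G0, G0 \in bclosure Fam -> G0 != [set: 'I_r] ->
     exists x : 'rV[R]_r,
       Hsys Fam (bclosure Fam :\ G0) x /\ ~ Hsys Fam (bclosure Fam) x).
Proof.
split; first exact: dim_DeltaFam.
split; first by move=> G; apply: Gface_facet.
split; first by move=> G1 G2 _ _; apply: Gface_inj.
split; first by move=> S; apply: facet_Gface.
by move=> G0; apply: Gface_irredundant.
Qed.
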